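(* $h_\omega(w)=\frac w4+O(w^{3/4})$; that is, there exist constants $C>0$ and $w_0\ge1$ such that $h_\omega(w)\le\frac w4+Cw^{3/4}$ for all real $w\ge w_0$.
   Context: A weighted digraph $D=(V,A,w_D)$ is a digraph without loops or parallel arcs (opposite arcs allowed) with weights $w_D:A\to\mathbb{R}_{\ge0}$; $w(D)$ is its total arc weight. For a partition $(X,Y)$ of $V$, the dicut $(X,Y)$ consists of the arcs from $X$ to $Y$, and its weight is their total weight. $\mathcal{D}_\omega(w)$ is the set of weighted digraphs $D$ in which every arc has weight at least $1$ and $w(D)=w$. For real $w\ge1$, $h_\omega(w)$ is the supremum of reals $g$ such that every acyclic $D\in\mathcal{D}_\omega(w)$ has a dicut of weight at least $g$. *)

From mathcomp Require Import all_boot all_order all_algebra.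
From mathcomp Require Import classical_sets reals exp.
Set Implicit Arguments. Unset Strict Implicit. Unset Printing Implicit Defensive.
Import Order.TTheory GRing.Theory Num.Theory.
Local Open Scope ring_scope.
Local Open Scope classical_set_scope.

(* A weighted digraph is given by a finite vertex type V, an arc relation
   [arc : rel V] (arc u v means there is an arc u -> v; being a relation,
   there are no parallel arcs, while opposite arcs are allowed) and a weight
   function [wt : V -> V -> R] whose values matter only on arcs. *)

Section WDigraph.
Variables (R : realType) (V : finType).

Definition total_weight (arc : rel V) (wt : V -> V -> R) : R :=
  \sum_(u : V) \sum_(v : V | arc u v) wt u v.

Definition dicut_weight (arc : rel V) (wt : V -> V -> R) (X : {set V}) : R :=
  \sum_(u in X) \sum_(v in ~: X | arc u v) wt u v.

Definition acyclic (arc : rel V) : Prop :=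
  forall u v, arc u v -> ~~ connect arc v u.

Definition in_Domega (w : R) (arc : rel V) (wt : V -> V -> R) : Prop :=
  irreflexive arc /\ (forall u v, arc u v -> 1 <= wt u v) /\
  total_weight arc wt = w.
End WDigraph.

Definition h_omega (R : realType) (w : R) : R :=
  sup [set g : R | forall (V : finType) (arc : rel V) (wt : V -> V -> R),
         in_Domega w arc wt -> acyclic arc ->
         exists X : {set V}, g <= dicut_weight arc wt X].

(* The witness is a "window digraph".  On the vertices 0, ..., m+s-1 take the
   m windows W_k = {k, ..., k+s} (k < m); put an arc u -> v whenever u < v
   and some window contains both, weighted by t times the number of such
   windows.  The digraph is acyclic, its arcs weigh at least 1 when t >= 1,
   and its total weight is t m C(s+1, 2).  The weight of a dicut (X, ~X) is t
   times the sum over the windows of the number of pairs p < q of the window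
   with p in X and q outside X.  For a [0,1]-valued window y of length r this
   count is at most r^2/8 plus a drift term linear in y, and the drifts of
   consecutive windows telescope against a bounded potential, so every dicut
   weighs at most t (m (s+1)^2/8 + (s+1)^3).  With m = (s+1)^2 and t scaled
   to make the total weight w, this gives h_omega(w) <= w/4 + 9w/(4s) as soon
   as (s+1)^3 s/2 <= w; the choice s + 1 = floor(w^(1/4)) concludes. *)

From mathcomp Require Import all_boot all_order all_algebra.
From mathcomp Require Import classical_sets reals exp.
From mathcomp Require Import ring lra zify.
Set Implicit Arguments. Unset Strict Implicit. Unset Printing Implicit Defensive.
Import Order.TTheory GRing.Theory Num.Theory.
Local Open Scope ring_scope.

Section ForwardPairs.
Variable R : realFieldType.
Implicit Types (y : nat -> R) (r : nat).

(* For a fractional membership y of the positions 0, ..., r-1, the (weighted)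
   number of pairs p < q with p inside and q outside. *)
Definition forward_pairs y r : R := \sum_(q < r) \sum_(p < q) y p * (1 - y q).

Definition drift y r : R :=
  ((r%:R - 1) * \sum_(p < r) y p - 2 * \sum_(p < r) p%:R * y p) / 2.

Lemma forward_pairs_id y r :
  2 * forward_pairs y r =
  2 * (r%:R - 1) * \sum_(p < r) y p - (\sum_(p < r) y p) ^+ 2
  + \sum_(p < r) y p ^+ 2 - 2 * \sum_(p < r) p%:R * y p.
Proof.
rewrite /forward_pairs; elim: r => [|r IH]; first by rewrite !big_ord0; ring.
rewrite !big_ord_recr /= mulrDr IH -mulr_suml -natr1; ring.
Qed.

(* The quadratic part is at most r^2/8: use y_p^2 <= y_p and
   r M - M^2 <= r^2/4 for M = sum y. *)
Lemma forward_pairs_le y r : (forall i, 0 <= y i <= 1) ->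
  forward_pairs y r <= r%:R ^+ 2 / 8 + drift y r.
Proof.
move=> y01; have pairs_id := forward_pairs_id y r; rewrite /drift.
set M := \sum_(p < r) y p in pairs_id *.
set Q := \sum_(p < r) y p ^+ 2 in pairs_id.
have sq_le : Q <= M.
  apply: ler_sum => i _; have /andP[y0 y1] := y01 i.
  by rewrite expr2 ler_piMr.
have amgm : r%:R * M - r%:R ^+ 2 / 4 <= M ^+ 2.
  rewrite -subr_ge0 (_ : _ - _ = (r%:R / 2 - M) ^+ 2); first exact: sqr_ge0.
  by field.
lra.
Qed.

End ForwardPairs.

Section Potential.
Variables (R : realFieldType) (x : nat -> R) (s : nat).

Definition potential_coef (q : nat) : R := q.+1%:R * (s%:R - q%:R) / 2.

Definition potential (k : nat) : R :=
  \sum_(q < s.+1) potential_coef q * x (k + q).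

(* The drift of a window is the decrease of the potential when the window
   slides by one: both equal sum_p (s - 2p)/2 x(k + p). *)
Lemma drift_telescopes k :
  drift (fun p => x (k + p)) s.+1 = potential k - potential k.+1.
Proof.
have -> : drift (fun p => x (k + p)) s.+1 =
          \sum_(p < s.+1) (s%:R - 2 * p%:R) / 2 * x (k + p).
  rewrite [RHS](eq_bigr (fun p : 'I_s.+1 =>
                           s%:R / 2 * x (k + p) - p%:R * x (k + p))).
    by rewrite sumrB -mulr_sumr /drift -natr1 addrK; field.
  by move=> p _; field.
have coef_s : potential_coef s = 0 by rewrite /potential_coef subrr mulr0 mul0r.
have -> : potential k = potential_coef 0 * x k +
                        \sum_(i < s) potential_coef i.+1 * x (k + i.+1).
  by rewrite /potential big_ord_recl addn0.
have -> : potential k.+1 = \sum_(i < s) potential_coef i * x (k + i.+1).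
  rewrite /potential big_ord_recr /= coef_s mul0r addr0.
  by apply: eq_bigr => i _; rewrite addSnnS.
rewrite big_ord_recl addn0 -addrA -sumrB.
apply: f_equal2; first by rewrite /potential_coef /= mulr0 subr0 mul1r.
by apply: eq_bigr => i _; rewrite /potential_coef /bump /= -!natr1; field.
Qed.

Lemma sum_drift n :
  \sum_(k < n) drift (fun p => x (k + p)) s.+1 = potential 0 - potential n.
Proof.
elim: n => [|n IH]; first by rewrite big_ord0 subrr.
by rewrite big_ord_recr /= IH drift_telescopes; ring.
Qed.

Hypothesis x01 : forall i, 0 <= x i <= 1.

Lemma potential_coef_bounds (q : 'I_s.+1) :
  0 <= potential_coef q <= s.+1%:R ^+ 2.
Proof.
have q_le_s : (q%:R : R) <= s%:R by rewrite ler_nat -ltnS.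
have q1_le_s1 : (q.+1%:R : R) <= s.+1%:R by rewrite ler_nat.
have q_ge0 : (0 : R) <= q%:R by [].
rewrite /potential_coef; apply/andP; split.
  by apply: divr_ge0 => //; apply: mulr_ge0 => //; rewrite subr_ge0.
have prod_le : q.+1%:R * (s%:R - q%:R) <= s.+1%:R * s.+1%:R :> R.
  by apply: ler_pM => //; [rewrite subr_ge0 | rewrite -natr1; lra].
have sq_ge0 : (0 : R) <= s.+1%:R * s.+1%:R by apply: mulr_ge0.
rewrite expr2; lra.
Qed.

(* The potential stays in [0, (s+1)^3], so the drifts of any number of
   consecutive windows add up to at most (s+1)^3. *)
Lemma potential_ge0 k : 0 <= potential k.
Proof.
apply: sumr_ge0 => q _; have /andP[c0 _] := potential_coef_bounds q.
by have /andP[x0 _] := x01 (k + q); apply: mulr_ge0.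
Qed.

Lemma potential_le k : potential k <= s.+1%:R ^+ 3.
Proof.
apply: (@le_trans _ _ (\sum_(q < s.+1) s.+1%:R ^+ 2)).
  apply: ler_sum => q _; have /andP[c0 c1] := potential_coef_bounds q.
  have /andP[x0 x1] := x01 (k + q).
  by apply: le_trans c1; rewrite ler_piMr.
by rewrite sumr_const card_ord [leRHS]exprSr mulr_natr.
Qed.

End Potential.

Section Reindexing.
Variable R : nmodType.

Lemma sum_window n k a (G : nat -> R) : (k + a <= n)%N ->
  \sum_(u < n) (if (k <= u)%N && (u < k + a)%N then G u else 0) =
  \sum_(p < a) G (k + p)%N.
Proof.
move=> kan; rewrite -big_mkcond /= -(big_ord_widen_cond n (leq k) G kan).
rewrite -(@big_geq_mkord _ _ _ k (k + a) xpredT) -{1}[k]add0n big_addn addKn.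
by rewrite big_mkord; apply: eq_bigr => i _; rewrite addnC.
Qed.

Lemma sum_window_pairs n k r (F : nat -> nat -> R) : (k + r <= n)%N ->
  \sum_(u < n) \sum_(v < n)
     (if [&& (u < v)%N, (k <= u)%N & (v < k + r)%N] then F u v else 0) =
  \sum_(q < r) \sum_(p < q) F (k + p)%N (k + q)%N.
Proof.
move=> krn; rewrite exchange_big /=.
transitivity (\sum_(v < n) (if (k <= v)%N && (v < k + r)%N then
                \sum_(p < v - k) F (k + p)%N v else 0)).
  apply: eq_bigr => v _; case: ifP => [/andP[kv vr] | v_out].
    rewrite -(@sum_window n k (v - k) (fun u => F u v)); last first.
      by have := ltn_ord v; lia.
    by apply: eq_bigr => u _; rewrite vr andbT subnKC // andbC.
  apply: big1 => u _; rewrite (_ : [&& _, _ & _] = false) //.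
  by move: v_out; lia.
rewrite (@sum_window n k r (fun v => \sum_(p < v - k) F (k + p)%N v)) //.
by apply: eq_bigr => q _; rewrite addKn.
Qed.

End Reindexing.

Lemma sum_naturals (R : pzSemiRingType) n : \sum_(q < n) (q%:R : R) = 'C(n, 2)%:R.
Proof. by rewrite -natr_sum -(big_mkord xpredT id) -bin2_sum. Qed.

Lemma acyclic_of_rank (V : finType) (arc : rel V) (rank : V -> nat) :
  (forall u v, arc u v -> (rank u < rank v)%N) -> acyclic arc.
Proof.
move=> arc_up; suff rank_connect x y : connect arc x y -> (rank x <= rank y)%N.
  by move=> u v /arc_up uv; apply: contraL uv => /rank_connect; rewrite leqNgt.
move=> /connectP[p path_p ->]; elim: p x path_p => //= z p IH x /andP[xz path_p].
exact: leq_trans (ltnW (arc_up _ _ xz)) (IH _ path_p).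
Qed.

Lemma dicut_weightE (R : realType) (V : finType) (arc : rel V)
    (wt : V -> V -> R) (X : {set V}) :
  dicut_weight arc wt X = \sum_(u : V) \sum_(v : V | arc u v)
    wt u v * ((u \in X)%:R * (1 - (v \in X)%:R)).
Proof.
rewrite /dicut_weight big_mkcond; apply: eq_bigr => u _.
case: (u \in X); last by apply/esym/big1 => v _; rewrite mul0r mulr0.
rewrite big_mkcond [RHS]big_mkcond; apply: eq_bigr => v _.
by rewrite inE; case: (v \in X); case: (arc u v); rewrite /= ?subrr ?subr0 ?mulr0 ?mulr1.
Qed.

Lemma h_omega_le_witness (R : realType) (w B : R) (V : finType) (arc : rel V)
    (wt : V -> V -> R) :
  in_Domega w arc wt -> acyclic arc ->
  (forall X : {set V}, dicut_weight arc wt X <= B) -> h_omega w <= B.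
Proof.
move=> D_in D_acyclic dicut_le; apply: ge_sup.
  exists 0 => V' arc' wt' _ _; exists finset.set0.
  by rewrite /dicut_weight big_set0.
move=> g g_good; have [X gX] := g_good V arc wt D_in D_acyclic.
exact: le_trans gX _.
Qed.

Section WindowDigraph.
Variables (R : realType) (m s : nat).

Local Notation vertex := 'I_(m + s).

Definition covers (k u v : nat) : bool := (k <= u)%N && (v < k + s.+1)%N.

Definition window_arc : rel vertex :=
  fun u v => (u < v)%N && [exists k : 'I_m, covers k u v].

Definition multiplicity (u v : vertex) : R :=
  \sum_(k < m) (if covers k u v then 1 else 0).

Definition window_weight (t : R) (u v : vertex) : R := t * multiplicity u v.

Lemma sum_over_window_arcs (F : nat -> nat -> R) :
  \sum_(u : vertex) \sum_(v : vertex | window_arc u v) multiplicity u v * F u v =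
  \sum_(k < m) \sum_(q < s.+1) \sum_(p < q) F (k + p)%N (k + q)%N.
Proof.
have arc_term (u v : vertex) :
    (if window_arc u v then multiplicity u v * F u v else 0) =
    \sum_(k < m) (if [&& (u < v)%N, (k <= u)%N & (v < k + s.+1)%N]
                  then F u v else 0).
  rewrite /window_arc /multiplicity mulr_suml.
  case: (ltnP u v) => /= [uv|vu]; last by apply/esym/big1 => k _.
  case: existsP => [_|no_window].
    by apply: eq_bigr => k _; rewrite /covers; case: ifP; rewrite ?mul1r ?mul0r.
  apply/esym/big1 => k _; case: ifP => // covered.
  by case: no_window; exists k.
transitivity (\sum_(k < m) \sum_(u : vertex) \sum_(v : vertex)
    (if [&& (u < v)%N, (k <= u)%N & (v < k + s.+1)%N] then F u v else 0)).
  rewrite exchange_big /=; apply: eq_bigr => u _.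
  by rewrite big_mkcond exchange_big /=; apply: eq_bigr => v _; rewrite arc_term.
apply: eq_bigr => k _; apply: sum_window_pairs.
by have := ltn_ord k; lia.
Qed.

Lemma window_acyclic : acyclic window_arc.
Proof. by apply: (@acyclic_of_rank _ _ val) => u v /andP[]. Qed.

Lemma multiplicity_ge1 u v : window_arc u v -> 1 <= multiplicity u v.
Proof.
case/andP=> _ /existsP[k covered]; rewrite /multiplicity (bigD1 k) //= covered.
by rewrite lerDl; apply: sumr_ge0 => i _; case: ifP.
Qed.

(* Each window contributes C(s+1, 2) pairs. *)
Lemma window_total_weight t :
  total_weight window_arc (window_weight t) = t * (m * 'C(s.+1, 2))%:R.
Proof.
transitivity (t * \sum_(u : vertex) \sum_(v : vertex | window_arc u v)
                  multiplicity u v * 1).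
  rewrite mulr_sumr; apply: eq_bigr => u _; rewrite mulr_sumr.
  by apply: eq_bigr => v _; rewrite mulr1.
rewrite (sum_over_window_arcs (fun _ _ => 1)); congr (t * _).
under eq_bigr do under eq_bigr do rewrite sumr_const card_ord.
under eq_bigr do rewrite sum_naturals.
by rewrite sumr_const card_ord natrM mulr_natl.
Qed.

Lemma window_in_Domega t : 1 <= t ->
  in_Domega (t * (m * 'C(s.+1, 2))%:R) window_arc (window_weight t).
Proof.
move=> t_ge1; split; first by move=> u; rewrite /window_arc ltnn.
split; last exact: window_total_weight.
by move=> u v uv; apply: mulr_ege1 => //; exact: multiplicity_ge1.
Qed.

Definition side (X : {set vertex}) (p : nat) : R :=
  if insub p is Some u then (u \in X)%:R else 0.

Lemma sideE X (u : vertex) : side X u = (u \in X)%:R.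
Proof. by rewrite /side valK. Qed.

Lemma side01 X p : 0 <= side X p <= 1.
Proof.
by rewrite /side; case: insub => [u|]; [case: (u \in X)|]; rewrite ?lexx ?ler01.
Qed.

(* Bound each window by forward_pairs_le; the drifts telescope. *)
Lemma window_dicut_le t X : 0 <= t ->
  dicut_weight window_arc (window_weight t) X <=
  t * (m%:R * s.+1%:R ^+ 2 / 8 + s.+1%:R ^+ 3).
Proof.
move=> t_ge0; rewrite dicut_weightE.
have -> : \sum_(u : vertex) \sum_(v : vertex | window_arc u v)
      window_weight t u v * ((u \in X)%:R * (1 - (v \in X)%:R)) =
    t * \sum_(u : vertex) \sum_(v : vertex | window_arc u v)
      multiplicity u v * (side X u * (1 - side X v)).
  rewrite mulr_sumr; apply: eq_bigr => u _; rewrite mulr_sumr.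
  by apply: eq_bigr => v _; rewrite /window_weight !sideE -mulrA.
rewrite (sum_over_window_arcs (fun p q => side X p * (1 - side X q))).
apply: (ler_wpM2l t_ge0).
apply: (@le_trans _ _ (\sum_(k < m)
    (s.+1%:R ^+ 2 / 8 + drift (fun p => side X (k + p)) s.+1))).
  by apply: ler_sum => k _; apply: forward_pairs_le => i; exact: side01.
rewrite big_split /= sum_drift sumr_const card_ord -mulr_natl mulrA.
have potential_start := potential_le s (side01 X) 0.
have potential_end := potential_ge0 s (side01 X) m.
lra.
Qed.

End WindowDigraph.

(* (s+1)^2 windows, with weights scaled to total weight w, witness
   h_omega(w) <= w/4 + 9w/(4s). *)
Lemma h_omega_window (R : realType) (s : nat) (w : R) : (0 < s)%N ->
  s.+1%:R ^+ 3 * s%:R / 2 <= w -> h_omega w <= w / 4 + 9 / 4 * (w / s%:R).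
Proof.
move=> s_gt0 w_large; set m := (s.+1 ^ 2)%N.
have s_pos : (0 : R) < s%:R by rewrite ltr0n.
set W := s.+1%:R ^+ 3 * s%:R / 2 : R.
have W_gt0 : 0 < W.
  by rewrite /W; apply: divr_gt0 => //; apply: mulr_gt0 => //; apply: exprn_gt0.
have binom : 'C(s.+1, 2)%:R * 2 = s.+1%:R * s%:R :> R.
  by rewrite -!natrM mulnC -mul_bin_diag bin1.
have mC : (m * 'C(s.+1, 2))%:R = W.
  rewrite natrM /m natrX /W (_ : 'C(s.+1, 2)%:R = s.+1%:R * s%:R / 2 :> R).
    by field.
  by rewrite -binom; field.
set t := w / W.
have t_ge1 : 1 <= t by rewrite /t ler_pdivlMr // mul1r.
have tW : t * (m * 'C(s.+1, 2))%:R = w by rewrite mC /t divfK // gt_eqF.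
have bound_eq : t * (m%:R * s.+1%:R ^+ 2 / 8 + s.+1%:R ^+ 3) =
                w / 4 + 9 / 4 * (w / s%:R).
  rewrite /t /W /m natrX; field.
  by rewrite nat1r !pnatr_eq0 -lt0n s_gt0.
have D_in := window_in_Domega m s t_ge1; rewrite tW in D_in.
apply: (h_omega_le_witness D_in (@window_acyclic m s)) => X.
by rewrite -bound_eq; apply: window_dicut_le; apply: le_trans t_ge1.
Qed.

(* The scale s = floor(w^(1/4)) - 1 fits into w and has w / s = O(w^(3/4)). *)
Lemma fourth_root_scale (R : realType) (w : R) : 16 <= w ->
  exists s : nat, [/\ (0 < s)%N, s.+1%:R ^+ 3 * s%:R / 2 <= w &
                      w / s%:R <= 3 * powR w (3 / 4)].
Proof.
move=> w_ge16; have w_ge0 : 0 <= w by lra.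
set a := powR w (1 / 4); set b := powR w (3 / 4).
have a_ge0 : 0 <= a by apply: powR_ge0.
have b_ge0 : 0 <= b by apply: powR_ge0.
have a4 : a ^+ 4 = w.
  by rewrite -powR_mulrn // -powRrM (_ : 1 / 4 * 4%:R = 1) ?powRr1 //; field.
have w_ab : w = a * b.
  rewrite -powRD; last by apply/implyP => _; rewrite gt_eqF //; lra.
  by rewrite (_ : 1 / 4 + 3 / 4 = 1) ?powRr1 //; field.
have a_ge2 : 2 <= a.
  rewrite -(ler_pXn2r (n := 4)) ?nnegrE // a4.
  by rewrite (_ : (2 : R) ^+ 4 = 16) // !exprS expr0; lra.
set s := (Num.truncn a).-1.
have trunc_a : Num.truncn a = s.+1 by rewrite prednK // truncn_gt0; lra.
have s1_le : s.+1%:R <= a by rewrite -trunc_a truncn_le.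
have s2_gt : a < s.+2%:R by rewrite -trunc_a truncnS_gt.
have s_gt0 : (0 < s)%N by rewrite -ltnS -trunc_a truncn_ge_nat.
have s_ge1 : (1 : R) <= s%:R by rewrite ler1n.
exists s; split => //.
- have fourth_le : s.+1%:R ^+ 4 <= a ^+ 4 by rewrite lerXn2r ?nnegrE.
  rewrite -a4 (exprSr _ 3) -natr1 in fourth_le *.
  have : 0 <= (s%:R + 1) ^+ 3 :> R by apply: exprn_ge0; lra.
  nra.
- rewrite ler_pdivrMr ?w_ab; last lra.
  rewrite -!natr1 in s2_gt; nra.
Qed.

Theorem mainTheorem11 (R : realType) :
  exists C : R, 0 < C /\
  exists w0 : R, 1 <= w0 /\
  forall w : R, w0 <= w -> h_omega w <= w / 4 + C * powR w (3 / 4).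
Proof.
exists 7; split => //; exists 16; split; first by rewrite ler1n.
move=> w w_ge16; have [s [s_gt0 w_large w_div_s]] := fourth_root_scale w_ge16.
have root_ge0 : 0 <= powR w (3 / 4) by apply: powR_ge0.
apply: le_trans (h_omega_window s_gt0 w_large) _.
lra.
Qed.
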